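(* Let $n\ge3$ and $\omega\ge\lfloor 3n/4\rfloor$ be integers. Then the sequences in the set $\{\mathbf{s}_n\in\mathcal{R}(n,\lceil n/2\rceil): add(\mathbf{s}_n)=\omega-\lceil n/2\rceil\}$ are pairwise shift inequivalent, i.e. no two distinct elements of this set are circular shifts of one another.
   Context: All sequences are binary (entries in $\mathbb{Z}_2$), $\overline{x}=x\oplus1$, $x\bmod d$ is the least nonnegative residue, and $\mathbf{a}^q$ is the concatenation of $q$ copies of $\mathbf a$. For $\mathbf{s}_n=(s_0,\dots,s_{n-1})$, $\mathbf{s}_j=(s_0,\dots,s_{j-1})$. A length-$m$ sequence is periodic if it is the concatenation of $m/e$ copies of a length-$e$ sequence for a proper divisor $e$ of $m$, aperiodic otherwise. Right circular shift: $R^k(\mathbf{s}_n)=(s_{n-k},\dots,s_{n-1},s_0,\dots,s_{n-k-1})$, $0\le k<n$. For $c\ge\lfloor n/2\rfloor$ and $1\le d\le\min\{n-c,\lfloor n/2\rfloor\}$, $\mathcal{B}(n,c,d)$ is the set of aperiodic length-$n$ sequences $\mathbf{s}_n$ with $\mathbf{s}_d$ aperiodic and $\mathbf{s}_{c+d}=(s_0,\dots,s_{d-1})^q(s_0,\dots,s_{r-1},\overline{s_r})$, where $q=\lfloor(c+d-1)/d\rfloor$, $r=c+d-1-qd$, and $s_{c+d},\dots,s_{n-1}$ are arbitrary. $\mathcal{B}(n,c)=\bigcup_{d=1}^{\min\{n-c,\lfloor n/2\rfloor\}}\mathcal{B}(n,c,d)$. For $\mathbf{s}_n\in\mathcal{B}(n,c,d)$,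 $add(\mathbf{s}_n)$ is the integer $t\ge0$ such that $s_{n-1-i}=s_{(d-1-i)\bmod d}$ for $0\le i<t$ and $s_{n-1-t}\neq s_{(d-1-t)\bmod d}$. For $\mathbf{s}_n\in\mathcal{B}(n,c)$, $E(\mathbf{s}_n)=\{R^k(\mathbf{s}_n):0\le k<n\}\cap\mathcal{B}(n,c)$, and $\mathcal{R}(n,c)$ is the set of all $\mathbf{s}\in\mathcal{B}(n,c)$ with $add(\mathbf{s})\ge add(\mathbf a)$ for every $\mathbf a\in E(\mathbf s)$. *)

From mathcomp Require Import all_boot.
Set Implicit Arguments. Unset Strict Implicit. Unset Printing Implicit Defensive.

Definition periodic (s : seq bool) : Prop :=
  exists e, [/\ 0 < e, e < size s, e %| size s &
                s = flatten (nseq (size s %/ e) (take e s))].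

Definition aperiodic (s : seq bool) : Prop := ~ periodic s.

Definition Rshift (k : nat) (s : seq bool) : seq bool := rotr k s.

(* The set B(n,c,d), including the standing constraints on c and d. *)
Definition inB3 (n c d : nat) (s : seq bool) : Prop :=
  let q := (c + d - 1) %/ d in
  let r := c + d - 1 - q * d in
  [/\ n./2 <= c, 1 <= d & d <= minn (n - c) n./2] /\
  [/\ size s = n, aperiodic s, aperiodic (take d s) &
      take (c + d) s =
        flatten (nseq q (take d s)) ++ rcons (take r s) (~~ nth false s r)].

Definition inB2 (n c : nat) (s : seq bool) : Prop := exists d, inB3 n c d s.

(* add(s) for s in B(n,c,d): the least t >= 0 with
   s_{n-1-t} <> s_{(d-1-t) mod d}; note (d-1-t) mod d = d-1-(t mod d).
   (For s in B(n,c,d) such a t < n always exists, so [find] returns it.) *)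
Definition add (n d : nat) (s : seq bool) : nat :=
  find (fun t => nth false s (n - 1 - t) != nth false s (d.-1 - t %% d))
       (iota 0 n).

Definition inR (n c : nat) (s : seq bool) : Prop :=
  exists d, inB3 n c d s /\
    forall k d', k < n -> inB3 n c d' (Rshift k s) ->
      add n d' (Rshift k s) <= add n d s.

Definition inRadd (n c w : nat) (s : seq bool) : Prop :=
  inR n c s /\ exists d, inB3 n c d s /\ add n d s = w.

(* Read cyclically, a sequence s of B(n,c,d) with add(s) = v carries a run of
   period d that extends to neither side: its first c + d - 1 entries have
   period d, and add(s) says that this period continues backwards over the last
   v entries, so the run covers w + d - 1 positions, where w = v + c.  If
   t = R^k(s) lies in the same set, with period e, then s carries a second such
   run, of period e, covering w + e - 1 positions.  Since w >= floor(3n/4), each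
   run covers about three quarters of the circle.  Where the runs overlap on at
   least d + e - gcd(d,e) positions, the Fine-Wilf theorem gives the overlap the
   period gcd(d,e), and the break that ends one run inside the other cannot
   exist.  Otherwise the runs interleave, and a short chain of shifts by d inside
   the first run, by e inside the second and by multiples of n links the two
   ends of one of the four breaks.  Hence both runs start at the same place and
   have the same period, which forces k = 0, i.e. t = s. *)

From Stdlib Require Import ZArith Lia.
From mathcomp Require Import all_boot.

Set Implicit Arguments.
Unset Strict Implicit.
Unset Printing Implicit Defensive.

Open Scope Z_scope.

Section FineWilf.
Variable F : Z -> bool.

Definition periodic_on (x y p : Z) : Prop :=
  forall i, x <= i -> i + p < y -> F i = F (i + p).

Lemma periodic_on_sub x y x' y' p :
  x <= x' -> y' <= y -> periodic_on x y p -> periodic_on x' y' p.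
Proof. by move=> hx hy Hp i hi hip; apply: Hp; lia. Qed.

Lemma periodic_on_mul x y p : 0 <= p -> periodic_on x y p ->
  forall k, 0 <= k -> forall i, x <= i -> i + k * p < y -> F i = F (i + k * p).
Proof.
move=> p0 Hp k k0; pattern k; apply: natlike_ind => // [i _ _|k' k'0 IH i hi hik].
  by rewrite Z.mul_0_l Z.add_0_r.
rewrite (IH i hi); last by nia.
rewrite (_ : i + Z.succ k' * p = i + k' * p + p); last lia.
by apply: Hp; nia.
Qed.

Lemma periodic_on_congr x y p : 0 < p -> periodic_on x y p ->
  forall i j, x <= i < y -> x <= j < y -> (p | j - i) -> F i = F j.
Proof.
move=> p0 Hp.
suff up i j : x <= i -> j < y -> i <= j -> (p | j - i) -> F i = F j.
  move=> i j hi hj pij; case: (Z.le_gt_cases i j) => ij.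
    by apply: up => //; lia.
  symmetry; apply: up; try lia.
  by rewrite (_ : i - j = - (j - i)); [apply/Z.divide_opp_r | lia].
move=> hi hj ij [k hk].
have k0 : 0 <= k by nia.
rewrite (_ : j = i + k * p); last lia.
by apply: (periodic_on_mul _ Hp); lia.
Qed.

Lemma fine_wilf x y p q : 0 < p -> 0 < q ->
  periodic_on x y p -> periodic_on x y q ->
  p + q - Z.gcd p q <= y - x -> periodic_on x y (Z.gcd p q).
Proof.
have [m hm] : exists m, (Z.to_nat (p + q) <= m)%coq_nat by exists (Z.to_nat (p + q)).
elim: m p q x y hm => [|m IH] p q x y hm p0 q0 Hp Hq hlen; first lia.
wlog pq : p q p0 q0 Hp Hq hm hlen / p <= q.
  move=> W; case: (Z.le_gt_cases p q) => h; first exact: W.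
  by rewrite Z.gcd_comm; apply: W; rewrite 1?Z.gcd_comm //; lia.
have [<-|ltpq] : p = q \/ p < q by lia.
  by rewrite Z.gcd_diag Z.abs_eq //; lia.
set g := Z.gcd p q.
have g0 : 0 < g by have := Z.gcd_nonneg p q; have := Z.gcd_eq_0_l p q; lia.
have gp : (g | p) := Z.gcd_divide_l p q.
have gpx : g <= p by apply: Z.divide_pos_le.
have gle : g <= q - p.
  apply: Z.divide_pos_le; first lia.
  by apply: Z.divide_sub_r; [apply: Z.gcd_divide_r | exact: gp].
(* Euclid's step: [q - p] is a period once the first [p] positions are dropped. *)
have Hqp : periodic_on (x + p) y (q - p).
  move=> i hi hiy.
  rewrite -{1}(Z.sub_add p i) -(Hp (i - p)); try lia.
  by rewrite (Hq (i - p)); try lia; congr (F _); lia.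
have Hg : periodic_on (x + p) y g.
  rewrite /g -Z.gcd_sub_diag_r; apply: IH; try lia.
  - by apply: periodic_on_sub Hp; lia.
  - exact: Hqp.
  - by rewrite Z.gcd_sub_diag_r; lia.
move=> i hi hig.
case: (Z.le_gt_cases (x + p) i) => hxi; first exact: Hg.
rewrite (Hp i) //; last lia.
case: (Z.le_gt_cases (x + p) (i + g)) => hxg.
  apply: (periodic_on_congr g0 Hg); try lia.
  rewrite (_ : i + g - (i + p) = - (p - g)); last lia.
  by apply/Z.divide_opp_r/Z.divide_sub_r => //; apply: Z.divide_refl.
rewrite (Hp (i + g)); try lia.
by rewrite (_ : i + g + p = i + p + g); [apply: Hg | ]; lia.
Qed.

End FineWilf.

Lemma periodicK (F : Z -> bool) n : (forall z, F (z + n) = F z) ->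
  forall k z, F (z + k * n) = F z.
Proof.
move=> Fn; suff up k z : 0 <= k -> F (z + k * n) = F z.
  move=> k z; case: (Z.le_gt_cases 0 k) => hk; first exact: up.
  by rewrite -(up (- k) (z + k * n)); [congr (F _) | ]; lia.
move=> k0; pattern k; apply: natlike_ind => // [|k' k'0 IH].
  by rewrite Z.add_0_r.
by rewrite (_ : z + Z.succ k' * n = z + k' * n + n) ?Fn; last lia.
Qed.

Lemma aligned_runs_left_end (F : Z -> bool) p q l : 0 < p < q -> q <= l ->
  (forall j, 0 <= j < l -> F j = F (j - p)) ->
  (forall j, 0 <= j < l -> F j = F (j - q)) ->
  F (-1) = F (-1 - p).
Proof.
move=> pq ql run_p run_q.
have Pp : periodic_on F (- p) l p.
  by move=> i hi hil; rewrite (run_p (i + p)); [congr (F _) | ]; lia.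
have Pq : periodic_on F (- p) l q.
  by move=> i hi hil; rewrite (run_q (i + q)); [congr (F _) | ]; lia.
have g0 : 0 < Z.gcd p q.
  by have := Z.gcd_nonneg p q; have := Z.gcd_eq_0_l p q; lia.
have Pg : periodic_on F (- p) l (Z.gcd p q) by apply: (fine_wilf _ _ Pp Pq); lia.
rewrite (periodic_on_congr g0 Pg (j := -1 - p + q)); try lia.
  by rewrite run_q; [congr (F _) | ]; lia.
rewrite (_ : -1 - p + q - -1 = q - p); last lia.
by apply: Z.divide_sub_r; [apply: Z.gcd_divide_r | apply: Z.gcd_divide_l].
Qed.

Section TwoMaximalRuns.
Variables (F : Z -> bool) (n d e l D : Z).
Hypothesis F_periodic : forall z, F (z + n) = F z.
Hypotheses (n_ge3 : 3 <= n) (d_pos : 1 <= d) (d_half : 2 * d <= n).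
Hypotheses (e_pos : 1 <= e) (e_half : 2 * e <= n).
Hypotheses (l_large : 3 * n <= 4 * l + 7) (D_range : 0 <= D < n).
Hypothesis run_d : forall j, 0 <= j < l -> F j = F (j - d).
Hypothesis run_e : forall j, D <= j < D + l -> F j = F (j - e).
Hypothesis run_d_right : F l <> F (l - d).
Hypothesis run_d_left : F (-1) <> F (-1 - d).
Hypothesis run_e_right : F (D + l) <> F (D + l - e).
Hypothesis run_e_left : F (D - 1) <> F (D - 1 - e).

Local Notation g := (Z.gcd d e).

Lemma n_step a b k : a = b + k * n -> F a = F b.
Proof. by move=> ->; apply: periodicK. Qed.

Lemma d_step a b k : a - b = d -> 0 <= a - k * n < l -> F a = F b.
Proof.
move=> ab hk.
rewrite -[a](Z.sub_add (k * n)) -[b](Z.sub_add (k * n)) !(periodicK F_periodic).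
by rewrite run_d //; congr (F _); lia.
Qed.

Lemma e_step a b k : a - b = e -> D <= a - k * n < D + l -> F a = F b.
Proof.
move=> ab hk.
rewrite -[a](Z.sub_add (k * n)) -[b](Z.sub_add (k * n)) !(periodicK F_periodic).
by rewrite run_e //; congr (F _); lia.
Qed.

Lemma gcd_de_pos : 0 < g.
Proof. by have := Z.gcd_nonneg d e; have := Z.gcd_eq_0_l d e; lia. Qed.

Lemma gcd_de_le : g <= d /\ g <= e.
Proof.
split; apply: Z.divide_pos_le;
  [lia | apply: Z.gcd_divide_l | lia | apply: Z.gcd_divide_r].
Qed.

Lemma gcd_de_diag : d = e -> g = d.
Proof. by move=> <-; rewrite Z.gcd_diag Z.abs_eq //; lia. Qed.

Lemma gcd_de_divides a b : a - b = e - d -> (g | a - b).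
Proof.
move=> ->; apply: Z.divide_sub_r; [apply: Z.gcd_divide_r | apply: Z.gcd_divide_l].
Qed.

(* [walk x] reduces [F a = F b] to [F x = F b], proving [F a = F x] by a shift by
   d inside the d-run, by e inside the e-run (both up to multiples of n), or by
   a multiple of n. *)
Ltac step_by m :=
  first [ apply: (d_step (k := m)); lia | symmetry; apply: (d_step (k := m)); lia
        | apply: (e_step (k := m)); lia | symmetry; apply: (e_step (k := m)); lia
        | apply: (n_step (k := m)); lia ].
Ltac step := first [ step_by 0 | step_by 1 | step_by (-1) | step_by 2 ].
Tactic Notation "walk" constr(x) := transitivity (F x); first step.

Lemma runs_aligned : D = 0 -> d = e.
Proof.
move=> D0; subst D.
have run_e' j : 0 <= j < l -> F j = F (j - e) by move=> hj; apply: run_e; lia.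
have [lt_de|[//|lt_ed]] := Z.lt_total d e.
  by case: run_d_left; apply: (aligned_runs_left_end _ _ run_d run_e'); lia.
by case: run_e_left; apply: (aligned_runs_left_end _ _ run_e' run_d); lia.
Qed.

Lemma runs_overlap_right x : 0 < D -> -d <= x -> D - e <= x ->
  d + e - g <= l - x -> False.
Proof.
move=> D0 hxd hxe hlen; have [gd ge] := gcd_de_le.
have Pd : periodic_on F x l d.
  by move=> i hi hil; symmetry; apply: (d_step (k := 0)); lia.
have Pe : periodic_on F x l e.
  by move=> i hi hil; symmetry; apply: (e_step (k := 0)); lia.
have Pg := fine_wilf (ltac:(lia) : 0 < d) (ltac:(lia) : 0 < e) Pd Pe hlen.
apply: run_d_right; walk (l - e).
by apply: (periodic_on_congr gcd_de_pos Pg); try apply: gcd_de_divides; lia.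
Qed.

Lemma runs_overlap_left x : 0 < D -> -d <= x -> D - n - e <= x ->
  d + e - g <= D + l - n - x -> False.
Proof.
move=> D0 hxd hxe hlen; have [gd ge] := gcd_de_le.
have Pd : periodic_on F x (D + l - n) d.
  by move=> i hi hil; symmetry; apply: (d_step (k := 0)); lia.
have Pe : periodic_on F x (D + l - n) e.
  by move=> i hi hil; symmetry; apply: (e_step (k := -1)); lia.
have Pg := fine_wilf (ltac:(lia) : 0 < d) (ltac:(lia) : 0 < e) Pd Pe hlen.
apply: run_e_right; walk (D + l - n); walk (D + l - n - d).
transitivity (F (D + l - n - e)); last step.
symmetry; apply: (periodic_on_congr gcd_de_pos Pg); try apply: gcd_de_divides; lia.
Qed.

Lemma runs_interleaved_far : e < D -> l - d + g < D < n - l + e - g -> False.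
Proof.
move=> eD hD; have [gd ge] := gcd_de_le; have g0 := gcd_de_pos.
have gdiag := gcd_de_diag.
case: (Z.le_gt_cases n (e + l)) => hel.
  case: (Z.le_gt_cases D (l + e - d)) => hD'.
    by apply: run_d_right; walk (l + e); walk (l + e - d); step.
  by apply: run_d_right; walk (l - e); walk (l - e - d); step.
case: (Z.le_gt_cases n (d + l)) => hdl.
  case: (Z.le_gt_cases D (n - d - 1)) => hD'.
    by apply: run_e_right; walk (D + l + d); walk (D + l + d - e); step.
  case: (Z.le_gt_cases (d + 1) D) => hD''.
    apply: run_d_right; walk (l + e); walk (l + e + d); walk (l + 2 * e + d).
    by walk (l + 2 * e + 2 * d); step.
  by apply: run_d_right; walk (l + d); step.
case: (Z.le_gt_cases (n + 1) (d + e + D)) => hD'.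
  by apply: run_d_right; walk (l + e); walk (l + e + d); walk (l + e + 2 * d); step.
apply: run_e_right; walk (D + l + d); walk (D + l + d + e).
by walk (D + l + d + 2 * e); step.
Qed.

Lemma runs_interleaved_near : 0 < D <= e -> l - d + g < D < n - l + e - g -> False.
Proof.
move=> De hD; have [gd ge] := gcd_de_le; have g0 := gcd_de_pos.
have gdiag := gcd_de_diag.
case: (Z.le_gt_cases n (D + l + d - e)) => hD'.
  by apply: run_e_right; walk (D + l + d); walk (D + l + d - e); step.
case: (Z.le_gt_cases n (d + l)) => hdl.
  by apply: run_e_right; walk (D + l - d); walk (D + l - d - e); step.
case: (Z.le_gt_cases D (n - e - 1)) => hD''.
  apply: run_e_right; walk (D + l + d); walk (D + l + d + e).
  by walk (D + l + 2 * d + e); walk (D + l + 2 * d + 2 * e); step.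
by apply: run_e_right; walk (D + l + e); step.
Qed.

Lemma runs_coincide : D = 0 /\ d = e.
Proof.
have [gd ge] := gcd_de_le; have g0 := gcd_de_pos.
have [D0|D0] : D = 0 \/ 0 < D by lia.
  by split => //; apply: runs_aligned.
exfalso.
case: (Z.le_gt_cases (d + e - g) (l - Z.max (- d) (D - e))) => ov_right.
  by apply: (runs_overlap_right (x := Z.max (- d) (D - e))); lia.
case: (Z.le_gt_cases (d + e - g) (D + l - n - Z.max (- d) (D - n - e))) => ov_left.
  by apply: (runs_overlap_left (x := Z.max (- d) (D - n - e))); lia.
case: (Z.le_gt_cases D e) => De.
  by apply: runs_interleaved_near; lia.
by apply: runs_interleaved_far; lia.
Qed.

End TwoMaximalRuns.

Definition periodic_run (F : Z -> bool) (p l A : Z) : Prop :=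
  forall j, 0 <= j < l -> F (A + j) = F (A + j - p).

(* The window [A - p, A + l) of F has period p and extends to neither side. *)
Definition maximal_run (F : Z -> bool) (p l A : Z) : Prop :=
  [/\ periodic_run F p l A, F (A + l) <> F (A + l - p) & F (A - 1) <> F (A - 1 - p)].

Lemma maximal_runs_coincide (F : Z -> bool) n p q l A B :
  (forall z, F (z + n) = F z) -> 3 <= n ->
  1 <= p -> 2 * p <= n -> 1 <= q -> 2 * q <= n -> 3 * n <= 4 * l + 7 ->
  maximal_run F p l A -> maximal_run F q l B -> p = q /\ (B - A) mod n = 0.
Proof.
move=> Fn n3 p1 p2 q1 q2 l_large [run_p p_right p_left] [run_q q_right q_left].
have BA := Z.div_mod (B - A) n (ltac:(lia) : n <> 0).
set D := (B - A) mod n in BA *; set M := (B - A) / n in BA.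
have D_range : 0 <= D < n by apply: Z.mod_pos_bound; lia.
set G := fun z => F (A + z).
have GF z : G z = F (B + (z - D)).
  by rewrite /G -(periodicK Fn M); congr (F _); lia.
suff [D0 pq] : D = 0 /\ p = q by [].
apply: (runs_coincide (F := G) (n := n) (l := l)) => //.
- by move=> z; rewrite /G Z.add_assoc Fn.
- by move=> j hj; rewrite /G Z.add_sub_assoc run_p.
- move=> j hj; rewrite !GF (_ : B + (j - q - D) = B + (j - D) - q); last lia.
  by rewrite run_q //; lia.
- by rewrite /G Z.add_sub_assoc.
- by rewrite /G (_ : A + -1 = A - 1) 1?(_ : A + (-1 - p) = A - 1 - p) //; lia.
- by rewrite !GF (_ : B + (D + l - D) = B + l)
    1?(_ : B + (D + l - q - D) = B + l - q) //; lia.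
- by rewrite !GF (_ : B + (D - 1 - D) = B - 1)
    1?(_ : B + (D - 1 - q - D) = B - 1 - q) //; lia.
Qed.

Lemma periodic_run_lt_period (F : Z -> bool) n p l A : 0 < n ->
  (forall z, F (z + n) = F z) -> periodic_run F p l A ->
  F (A + l) <> F (A + l - p) -> l < n.
Proof.
move=> n0 Fn run brk; case: (Z.lt_ge_cases l n) => // ln; case: brk.
have back z : F z = F (z - n) by rewrite -{1}(Z.sub_add n z) Fn.
rewrite back [F (A + l - p)]back (_ : A + l - n = A + (l - n)) ?run; try lia.
by congr (F _); lia.
Qed.

Lemma maximal_run_shift (F G : Z -> bool) T p l A :
  (forall z, G z = F (z + T)) -> maximal_run G p l A -> maximal_run F p l (A + T).
Proof.
move=> GF [run right left]; split.
- by move=> j hj; have := run j hj; rewrite !GF; congr (F _ = F _); lia.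
- rewrite !GF in right.
  by rewrite (_ : A + T + l - p = A + l - p + T) (_ : A + T + l = A + l + T) //; lia.
- rewrite !GF in left.
  by rewrite (_ : A + T - 1 - p = A - 1 - p + T) (_ : A + T - 1 = A - 1 + T) //; lia.
Qed.

Section Agreement.
Variables (F P : Z -> bool) (p a b : Z).
Hypotheses (p_pos : 0 < p) (P_periodic : forall z, P (z + p) = P z).
Hypotheses (p_le : p <= b - a) (agree : forall z, a <= z < b -> F z = P z).
Hypothesis right_break : F b <> P b.

Lemma agree_periodic_run : periodic_run F p (b - a - p) (a + p).
Proof.
move=> j hj; rewrite !agree; try lia.
by rewrite -[in LHS](Z.sub_add p (a + p + j)) P_periodic.
Qed.

Lemma agree_right_break : F (a + p + (b - a - p)) <> F (a + p + (b - a - p) - p).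
Proof.
rewrite (_ : a + p + (b - a - p) = b); last lia.
rewrite (@agree (b - p)); last lia.
by rewrite -P_periodic Z.sub_add.
Qed.

Lemma agree_maximal_run : F (a - 1) <> P (a - 1) -> maximal_run F p (b - a - p) (a + p).
Proof.
move=> left_break; split; [exact: agree_periodic_run | exact: agree_right_break |].
rewrite (_ : a + p - 1 - p = a - 1); last lia.
rewrite (@agree (a + p - 1)); last lia.
by rewrite (_ : a + p - 1 = a - 1 + p) ?P_periodic; [apply: nesym | lia].
Qed.

End Agreement.

Close Scope Z_scope.

From mathcomp Require Import zify.

Definition cyc (s : seq bool) (z : Z) : bool :=
  nth false s (Z.to_nat (z mod Z.of_nat (size s))).

Lemma Z_of_nat_modn a b : 0 < b -> Z.of_nat (a %% b) = (Z.of_nat a mod Z.of_nat b)%Z.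
Proof.
move=> b0; apply: (Z.mod_unique_pos _ _ (Z.of_nat (a %/ b))).
  by have := ltn_pmod a b0; lia.
by rewrite {1}(divn_eq a b) Nat2Z.inj_add Nat2Z.inj_mul; ring.
Qed.

Lemma cyc_periodic s z : 0 < size s -> cyc s (z + Z.of_nat (size s)) = cyc s z.
Proof. by move=> s0; rewrite /cyc -[X in (z + X)%Z]Z.mul_1_l Z.mod_add //; lia. Qed.

Lemma cyc_nat s i : 0 < size s -> cyc s (Z.of_nat i) = nth false s (i %% size s).
Proof. by move=> s0; rewrite /cyc -Z_of_nat_modn ?Nat2Z.id. Qed.

Lemma cyc_neg s t : 0 < size s ->
  cyc s (-1 - Z.of_nat t) = nth false s ((size s).-1 - t %% size s).
Proof.
move=> s0; rewrite /cyc; have := divn_eq t (size s); have := ltn_pmod t s0.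
move: (t %/ size s) (t %% size s) => q r r_lt ->.
rewrite (_ : (-1 - _ = Z.of_nat ((size s).-1 - r)
                       + (- Z.of_nat q - 1) * Z.of_nat (size s))%Z); last lia.
by rewrite Z.mod_add ?Z.mod_small ?Nat2Z.id //; lia.
Qed.

Lemma nth_rotr (T : Type) (x0 : T) (s : seq T) k i : k <= size s -> i < size s ->
  nth x0 (rotr k s) i = nth x0 s ((i + (size s - k)) %% size s).
Proof.
move=> hk hi; rewrite /rotr /rot nth_cat size_drop.
case: ltnP => h; first by rewrite nth_drop modn_small 1?addnC //; lia.
rewrite nth_take; last lia.
rewrite -(subnK (_ : size s <= i + (size s - k))) ?modnDr ?modn_small; try lia.
by congr nth; lia.
Qed.

Lemma cyc_rotr s k z : k <= size s ->
  cyc (rotr k s) z = cyc s (z + Z.of_nat (size s - k)).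
Proof.
move=> hk; have [/size0nil ->|s0] := posnP (size s).
  by rewrite /cyc /rotr /rot /= !nth_nil.
have z_mod : (0 <= z mod Z.of_nat (size s) < Z.of_nat (size s))%Z.
  by apply: Z.mod_pos_bound; lia.
rewrite /cyc size_rotr nth_rotr ?size_rotr; try lia.
rewrite -Zplus_mod_idemp_l; congr nth.
rewrite -[(z mod _)%Z]Z2Nat.id; last lia.
by rewrite -Nat2Z.inj_add -Z_of_nat_modn ?Nat2Z.id.
Qed.

Lemma nth_flatten_nseq (T : Type) (x0 : T) (a : seq T) q i : i < q * size a ->
  nth x0 (flatten (nseq q a)) i = nth x0 a (i %% size a).
Proof.
elim: q i => [|q IH] i /=; first by rewrite mul0n.
rewrite mulSn nth_cat => hi; case: ltnP => h; first by rewrite modn_small.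
by rewrite IH; [rewrite -{2}(subnK h) modnDr | lia].
Qed.

Lemma nth_flatten_nseq_rcons (T : Type) (x0 : T) (a : seq T) q r b i :
  r < size a -> i <= q * size a + r ->
  nth x0 (flatten (nseq q a) ++ rcons (take r a) b) i =
  if i == q * size a + r then b else nth x0 a (i %% size a).
Proof.
move=> ra hi.
have size_qa : size (flatten (nseq q a)) = q * size a.
  by rewrite size_flatten /shape map_nseq sumn_nseq mulnC.
rewrite nth_cat size_qa; case: ltnP => h.
  by rewrite nth_flatten_nseq // ifN //; lia.
have i_mod : i %% size a = i - q * size a.
  by rewrite -{1}(subnK h) addnC modnMDl modn_small //; lia.
rewrite nth_rcons size_take ra i_mod; case: ltnP => h'.
  by rewrite nth_take // ifN //; lia.
have -> : i = q * size a + r by lia.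
by rewrite addKn !eqxx.
Qed.

Lemma inB3_nth n c d s i : inB3 n c d s -> i < c + d ->
  nth false s i = if i == c + d - 1 then ~~ nth false s ((c + d - 1) %% d)
                  else nth false s (i %% d).
Proof.
move=> [[_ d_pos d_le] [size_s _ _ block]] hi.
have cd_eq := divn_eq (c + d - 1) d.
have r_mod : c + d - 1 - (c + d - 1) %/ d * d = (c + d - 1) %% d.
  by rewrite {1}cd_eq addKn.
have r_lt : (c + d - 1) %% d < d by rewrite ltn_pmod.
have size_a : size (take d s) = d by rewrite size_takel // size_s; lia.
rewrite -(nth_take false hi) block r_mod -(take_takel _ (ltnW r_lt)).
rewrite nth_flatten_nseq_rcons size_a -?cd_eq; try lia.
by rewrite nth_take // ltn_pmod.
Qed.

Section AddFacts.
Variables (n d : nat) (s : seq bool).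
Let mismatch t := nth false s (n - 1 - t) != nth false s (d.-1 - t %% d).

Lemma add_le : add n d s <= n.
Proof. by rewrite -[n in _ <= n](size_iota 0 n) find_size. Qed.

Lemma add_agree t : t < add n d s ->
  nth false s (n - 1 - t) = nth false s (d.-1 - t %% d).
Proof.
move=> ht; have := before_find 0 ht; rewrite nth_iota; last by have := add_le; lia.
by move/negbFE/eqP.
Qed.

Lemma add_break : add n d s < n ->
  nth false s (n - 1 - add n d s) != nth false s (d.-1 - add n d s %% d).
Proof.
move=> hlt; have has_m : has mismatch (iota 0 n) by rewrite has_find size_iota.
by have := nth_find 0 has_m; rewrite nth_iota.
Qed.

End AddFacts.

Section SequenceRun.
Local Open Scope Z_scope.
Variables (n c d : nat) (s : seq bool).
Hypotheses (c_pos : (0 < c)%N) (B : inB3 n c d s).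

Local Notation v := (add n d s).
Local Notation P := (cyc (take d s)).

Let d_pos : (0 < d)%N. Proof. by case: B => [[]]. Qed.
Let size_s : size s = n. Proof. by case: B => _ []. Qed.
Let cd_le : (c + d <= n)%N. Proof. by have [[_ d1 d_le] _] := B; lia. Qed.
Let size_pos : (0 < size s)%N. Proof. by rewrite size_s; have := cd_le; lia. Qed.

Let size_take_d : size (take d s) = d.
Proof. by rewrite size_takel // size_s; have := cd_le; lia. Qed.

Let P_periodic z : P (z + Z.of_nat d) = P z.
Proof. by rewrite -[in Z.of_nat d]size_take_d cyc_periodic // size_take_d d_pos. Qed.

Let P_nat i : P (Z.of_nat i) = nth false s (i %% d).
Proof. by rewrite cyc_nat size_take_d ?d_pos // nth_take // ltn_pmod ?d_pos. Qed.

Let P_neg t : P (-1 - Z.of_nat t) = nth false s (d.-1 - t %% d).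
Proof.
rewrite cyc_neg size_take_d ?d_pos // nth_take //.
by have := ltn_pmod t d_pos; lia.
Qed.

Lemma inB3_cyc_agree z : - Z.of_nat v <= z < Z.of_nat (c + d - 1) -> cyc s z = P z.
Proof.
have v_le : (v <= n)%N by apply: add_le.
have cd := cd_le; move=> hz; case: (Z.le_gt_cases 0 z) => z0.
- rewrite -(Z2Nat.id z) // (cyc_nat _ size_pos) P_nat size_s modn_small; last lia.
  by rewrite (inB3_nth B) ?ifN //; lia.
- have -> : z = -1 - Z.of_nat (Z.to_nat (-1 - z)) by lia.
  rewrite (cyc_neg _ size_pos) P_neg size_s modn_small; last lia.
  by rewrite -(@add_agree n) ?subn1 //; lia.
Qed.

Lemma inB3_cyc_right_break : cyc s (Z.of_nat (c + d - 1)) <> P (Z.of_nat (c + d - 1)).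
Proof.
have cd := cd_le; rewrite (cyc_nat _ size_pos) P_nat size_s modn_small; last lia.
by rewrite (inB3_nth B) ?eqxx; [case: nth | lia].
Qed.

Lemma inB3_cyc_left_break : (v < n)%N -> cyc s (-1 - Z.of_nat v) <> P (-1 - Z.of_nat v).
Proof.
move=> v_lt; rewrite (cyc_neg _ size_pos) P_neg size_s (modn_small v_lt).
by have := add_break v_lt; rewrite subn1 => /eqP.
Qed.

Lemma inB3_maximal_run :
  maximal_run (cyc s) (Z.of_nat d) (Z.of_nat v + Z.of_nat c - 1) (Z.of_nat d - Z.of_nat v).
Proof.
have d0 : 0 < Z.of_nat d by have := d_pos; lia.
have ab : Z.of_nat d <= Z.of_nat (c + d - 1) - - Z.of_nat v by lia.
have agree := inB3_cyc_agree; have right := inB3_cyc_right_break.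
have v_lt : (v < n)%N.
  have n0 : 0 < Z.of_nat (size s) by have := size_pos; lia.
  have := periodic_run_lt_period n0 (fun z => @cyc_periodic s z size_pos)
    (agree_periodic_run d0 P_periodic agree) (agree_right_break d0 P_periodic ab agree right).
  by rewrite size_s; lia.
rewrite (_ : Z.of_nat v + _ - 1 = Z.of_nat (c + d - 1) - - Z.of_nat v - Z.of_nat d); last lia.
rewrite (_ : Z.of_nat d - Z.of_nat v = - Z.of_nat v + Z.of_nat d); last lia.
apply: (agree_maximal_run d0 P_periodic ab agree right).
by rewrite (_ : - Z.of_nat v - 1 = -1 - Z.of_nat v); [apply: inB3_cyc_left_break | lia].
Qed.

End SequenceRun.

Theorem lemma9 (n w : nat) (s t : seq bool) :
  3 <= n -> (3 * n) %/ 4 <= w ->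
  inRadd n ((n + 1) %/ 2) (w - (n + 1) %/ 2) s ->
  inRadd n ((n + 1) %/ 2) (w - (n + 1) %/ 2) t ->
  s <> t ->
  ~ (exists k, k < n /\ t = Rshift k s).
Proof.
(* Only the common value of add is used, not the maximality defining R(n, c). *)
move=> n3 hw [_ [d [Bs add_s]]] [_ [e [Bt add_t]]] st [k [kn t_eq]].
have c_pos : 0 < (n + 1) %/ 2 by lia.
have [[_ d_pos d_le] [size_s _ _ _]] := Bs; have [[_ e_pos e_le] _] := Bt.
have k_le : k <= size s by lia.
have run_s := inB3_maximal_run c_pos Bs; rewrite add_s in run_s.
have run_t := inB3_maximal_run c_pos Bt; rewrite add_t t_eq in run_t.
have {}run_t := maximal_run_shift (fun z => cyc_rotr z k_le) run_t.
set v := Z.of_nat (w - (n + 1) %/ 2) in run_s run_t.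
have [de nk] : (Z.of_nat d = Z.of_nat e /\
    (Z.of_nat e - v + Z.of_nat (size s - k) - (Z.of_nat d - v)) mod Z.of_nat (size s) = 0)%Z.
  apply: maximal_runs_coincide run_s run_t; try lia.
  by move=> z; apply: cyc_periodic; lia.
have [k0|k_pos] := posnP k.
  by apply: st; rewrite t_eq k0 /Rshift /rotr subn0 rot_size.
rewrite (_ : (Z.of_nat e - v + _ - _ = Z.of_nat (size s - k))%Z) in nk; last lia.
by rewrite Z.mod_small in nk; lia.
Qed.
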